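(* Let $(b,c)$ be a connected weighted graph over $X$ with $c\equiv0$. Then, pointwise on $X\times X$, $$\varrho=\sup\{\sigma:\ \sigma \text{ is a pseudometric on }X\text{ intrinsic with respect to some measure } m \text{ on } X \text{ with } m(X)\le1\}.$$
   Context: Let $X$ be a countably infinite set. A weighted graph $(b,c)$ over $X$ consists of a symmetric $b:X\times X\to[0,\infty)$ with $b(x,x)=0$ and $\sum_{y}b(x,y)<\infty$ for all $x$, and $c:X\to[0,\infty)$. A path is a finite sequence of pairwise distinct vertices with $b(x_{i-1},x_i)>0$ for consecutive vertices; the graph is connected if any two distinct vertices are joined by a path. For $f:X\to\mathbb C$ let $\widetilde Q(f)=\frac12\sum_{x,y}b(x,y)|f(x)-f(y)|^2+\sum_x c(x)|f(x)|^2\in[0,\infty]$, $\widetilde D=\{f:\widetilde Q(f)<\infty\}$, and $\varrho(x,y)=\sup\{|f(x)-f(y)|:f\in\widetilde D,\ \widetilde Q(f)\le1\}$. A measure on $X$ is a function $m:X\to[0,\infty)$ with $m(A)=\sum_{x\in A}m(x)$. A pseudometric $\sigma$ on $X$ is intrinsic with respect to $m$ if $\frac12\sum_{y}b(x,y)\sigma(x,y)^2\le m(x)$ for all $x\in X$. *)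

From Stdlib Require Import Reals Lra List.
Import ListNotations.
Open Scope R_scope.

Fixpoint psum (g : nat -> R) (N : nat) : R :=
  match N with
  | O => 0
  | S n => psum g n + g n
  end.

Definition enumeration (X : Type) (e : nat -> X) : Prop :=
  (forall x : X, exists n, e n = x) /\ (forall n k, e n = e k -> n = k).

(* For a nonnegative family g on X, "sum_{x in X} g x <= M" (in [0,oo]):
   all finite partial sums along the enumeration are bounded by M. *)
Definition sum_le {X : Type} (e : nat -> X) (g : X -> R) (M : R) : Prop :=
  forall N, psum (fun i => g (e i)) N <= M.

Definition weighted_graph {X : Type} (e : nat -> X)
  (b : X -> X -> R) (c : X -> R) : Prop :=
  (forall x y, 0 <= b x y) /\ (forall x y, b x y = b y x) /\
  (forall x, b x x = 0) /\
  (forall x, exists M, sum_le e (fun y => b x y) M) /\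
  (forall x, 0 <= c x).

Fixpoint edge_chain {X : Type} (b : X -> X -> R) (x : X) (l : list X) : Prop :=
  match l with
  | [] => True
  | y :: l' => 0 < b x y /\ edge_chain b y l'
  end.

Definition is_path {X : Type} (b : X -> X -> R) (x y : X) (l : list X) : Prop :=
  NoDup (x :: l) /\ last (x :: l) x = y /\ edge_chain b x l.

Definition connected {X : Type} (b : X -> X -> R) : Prop :=
  forall x y : X, x <> y -> exists l, is_path b x y l.

(* Complex-valued functions f = u + i v on X, represented by (u, v). *)
Definition cfun (X : Type) : Type := ((X -> R) * (X -> R))%type.

Definition cabs2 {X : Type} (f : cfun X) (x : X) : R :=
  (fst f x) ^ 2 + (snd f x) ^ 2.

Definition cdiff_abs2 {X : Type} (f : cfun X) (x y : X) : R :=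
  (fst f x - fst f y) ^ 2 + (snd f x - snd f y) ^ 2.

Definition cdiff_abs {X : Type} (f : cfun X) (x y : X) : R :=
  sqrt (cdiff_abs2 f x y).

(* "Qtilde(f) <= M" in [0,oo]: every finite partial sum of the
   nonnegative series defining Qtilde(f) is bounded by M. *)
Definition Qt_le {X : Type} (e : nat -> X) (b : X -> X -> R) (c : X -> R)
  (f : cfun X) (M : R) : Prop :=
  forall N,
    / 2 * psum (fun i => psum (fun j =>
              b (e i) (e j) * cdiff_abs2 f (e i) (e j)) N) N
    + psum (fun i => c (e i) * cabs2 f (e i)) N <= M.

(* The set whose supremum is rho(x,y):
   { |f(x)-f(y)| : f in Dtilde, Qtilde(f) <= 1 }. *)
Definition rho_set {X : Type} (e : nat -> X) (b : X -> X -> R) (c : X -> R)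
  (x y : X) (r : R) : Prop :=
  exists f : cfun X, Qt_le e b c f 1 /\ r = cdiff_abs f x y.

Definition pseudometric {X : Type} (s : X -> X -> R) : Prop :=
  (forall x y, 0 <= s x y) /\ (forall x, s x x = 0) /\
  (forall x y, s x y = s y x) /\
  (forall x y z, s x z <= s x y + s y z).

Definition measure {X : Type} (m : X -> R) : Prop := forall x, 0 <= m x.

Definition intrinsic {X : Type} (e : nat -> X) (b : X -> X -> R)
  (m : X -> R) (s : X -> X -> R) : Prop :=
  forall x, sum_le e (fun y => / 2 * (b x y * (s x y) ^ 2)) (m x).

Definition intr_set {X : Type} (e : nat -> X) (b : X -> X -> R)
  (x y : X) (r : R) : Prop :=
  exists (s : X -> X -> R) (m : X -> R),
    pseudometric s /\ measure m /\ sum_le e m 1 /\ intrinsic e b m s /\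
    r = s x y.

From Stdlib Require Import Reals.
From Stdlib Require Import Lra Psatz.
Open Scope R_scope.

(* Without killing term, Qtilde(f) is the Dirichlet energy
   (1/2) sum_{x,y} b(x,y)|f(x)-f(y)|^2, and both sets have the same
   elements, so they have the same upper bounds.
   - If sigma is a pseudometric intrinsic w.r.t. m with m(X) <= 1, then
     f = sigma(x,.) is 1-Lipschitz for sigma, hence
     Qtilde(f) <= sum_z (1/2) sum_w b(z,w) sigma(z,w)^2 <= m(X) <= 1, and
     |f(x) - f(y)| = sigma(x,y).
   - If Qtilde(f) <= 1, then sigma = |f(.) - f(.)| is a pseudometric and
     the local energies m(z) = (1/2) sum_w b(z,w)|f(z)-f(w)|^2 form a
     measure with m(X) = Qtilde(f) <= 1 w.r.t. which sigma is intrinsic. *)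

Lemma psum_nonneg (g : nat -> R) (N : nat) :
  (forall i, 0 <= g i) -> 0 <= psum g N.
Proof. intro Hg; induction N; simpl; [lra|]. specialize (Hg N); lra. Qed.

Lemma psum_mono (g : nat -> R) (N K : nat) :
  (forall i, 0 <= g i) -> (N <= K)%nat -> psum g N <= psum g K.
Proof. intros Hg Hle; induction Hle; simpl; [lra|]. specialize (Hg m); lra. Qed.

Lemma psum_le (g h : nat -> R) (N : nat) :
  (forall i, g i <= h i) -> psum g N <= psum h N.
Proof. intro Hgh; induction N; simpl; [lra|]. specialize (Hgh N); lra. Qed.

Lemma psum_ext (g h : nat -> R) (N : nat) :
  (forall i, g i = h i) -> psum g N = psum h N.
Proof. intro Hgh; induction N; simpl; [|rewrite IHN, Hgh]; reflexivity. Qed.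

Lemma psum_scal (g : nat -> R) (k : R) (N : nat) :
  psum (fun i => k * g i) N = k * psum g N.
Proof. induction N; simpl; [ring|]. rewrite IHN; ring. Qed.

Lemma psum_zero (N : nat) : psum (fun _ => 0) N = 0.
Proof. induction N; simpl; [|rewrite IHN]; ring. Qed.

Lemma psum_term (g : nat -> R) (k N : nat) :
  (forall i, 0 <= g i) -> (k < N)%nat -> g k <= psum g N.
Proof.
  intros Hg Hk. induction Hk; simpl.
  - pose proof (psum_nonneg g k Hg); lra.
  - specialize (Hg m); lra.
Qed.

Lemma psum2_rect_le (a : nat -> nat -> R) (B : R) :
  (forall i j, 0 <= a i j) ->
  (forall K, psum (fun i => psum (a i) K) K <= B) ->
  forall N M, psum (fun i => psum (a i) M) N <= B.
Proof.
  intros Ha Hsq N M. eapply Rle_trans; [|apply (Hsq (max N M))].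
  apply Rle_trans with (psum (fun i => psum (a i) M) (max N M)).
  - apply psum_mono; [intro; apply psum_nonneg; auto | apply Nat.le_max_l].
  - apply psum_le; intro i. apply psum_mono; [auto | apply Nat.le_max_r].
Qed.

Lemma psum_limit (g : nat -> R) (B : R) :
  (forall i, 0 <= g i) -> (forall N, psum g N <= B) ->
  { l : R | Un_cv (psum g) l /\ forall N, psum g N <= l }.
Proof.
  intros Hg HB.
  assert (Hgrow : Un_growing (psum g)) by (intro n; simpl; specialize (Hg n); lra).
  assert (Hub : has_ub (psum g)) by (exists B; intros v [N ->]; apply HB).
  destruct (growing_cv _ Hgrow Hub) as [l Hl].
  exists l. split; [exact Hl|]. intro N. apply growing_ineq; assumption.
Qed.

Lemma un_cv_psum (s : nat -> nat -> R) (l : nat -> R) (N : nat) :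
  (forall i, Un_cv (s i) (l i)) ->
  Un_cv (fun M => psum (fun i => s i M) N) (psum l N).
Proof.
  intro Hs; induction N; simpl.
  - intros eps Heps; exists 0%nat; intros.
    unfold Rdist; rewrite Rminus_diag, Rabs_R0; lra.
  - apply CV_plus; auto.
Qed.

Lemma psum_lim_le (s : nat -> nat -> R) (l : nat -> R) (N : nat) (B : R) :
  (forall i, Un_cv (s i) (l i)) ->
  (forall M, psum (fun i => s i M) N <= B) -> psum l N <= B.
Proof.
  intros Hs HB.
  apply Rle_cv_lim with (Un := fun M => psum (fun i => s i M) N) (Vn := fun _ => B);
    [exact HB | apply un_cv_psum; exact Hs |].
  intros eps Heps; exists 0%nat; intros.
  unfold Rdist; rewrite Rminus_diag, Rabs_R0; lra.
Qed.

Lemma cdiff_abs2_nonneg {X : Type} (f : cfun X) (u v : X) : 0 <= cdiff_abs2 f u v.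
Proof.
  unfold cdiff_abs2.
  pose proof (pow2_ge_0 (fst f u - fst f v)); pose proof (pow2_ge_0 (snd f u - snd f v)).
  lra.
Qed.

Lemma cdiff_abs_sq {X : Type} (f : cfun X) (u v : X) :
  cdiff_abs f u v ^ 2 = cdiff_abs2 f u v.
Proof.
  unfold cdiff_abs. simpl. rewrite Rmult_1_r.
  apply sqrt_sqrt, cdiff_abs2_nonneg.
Qed.

Lemma plane_triangle (a b c d : R) :
  sqrt ((a + c) ^ 2 + (b + d) ^ 2) <= sqrt (a ^ 2 + b ^ 2) + sqrt (c ^ 2 + d ^ 2).
Proof.
  set (B := a ^ 2 + b ^ 2). set (C := c ^ 2 + d ^ 2).
  assert (HB : 0 <= B) by (unfold B; nra).
  assert (HC : 0 <= C) by (unfold C; nra).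
  assert (cauchy_schwarz : a * c + b * d <= sqrt B * sqrt C).
  { rewrite <- sqrt_mult by assumption.
    assert (Rabs (a * c + b * d) <= sqrt (B * C)).
    { rewrite <- sqrt_Rsqr_abs. apply sqrt_le_1_alt. unfold Rsqr, B, C.
      pose proof (pow2_ge_0 (a * d - b * c)). nra. }
    pose proof (Rle_abs (a * c + b * d)); lra. }
  rewrite <- (sqrt_Rsqr (sqrt B + sqrt C))
    by (pose proof (sqrt_pos B); pose proof (sqrt_pos C); lra).
  apply sqrt_le_1_alt. unfold Rsqr.
  pose proof (sqrt_sqrt B HB); pose proof (sqrt_sqrt C HC).
  unfold B, C in *. nra.
Qed.

Lemma cdiff_pseudometric {X : Type} (f : cfun X) : pseudometric (cdiff_abs f).
Proof.
  unfold pseudometric, cdiff_abs, cdiff_abs2. repeat split.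
  - intros; apply sqrt_pos.
  - intros; replace (_ + _) with 0 by ring; apply sqrt_0.
  - intros; f_equal; ring.
  - intros u v w.
    replace (fst f u - fst f w) with ((fst f u - fst f v) + (fst f v - fst f w)) by ring.
    replace (snd f u - snd f w) with ((snd f u - snd f v) + (snd f v - snd f w)) by ring.
    apply plane_triangle.
Qed.

Lemma Qt_le_no_killing {X : Type} (e : nat -> X) (b : X -> X -> R) (c : X -> R)
  (f : cfun X) (M : R) :
  (forall x, c x = 0) ->
  Qt_le e b c f M <->
  forall N, / 2 * psum (fun i => psum (fun j =>
                b (e i) (e j) * cdiff_abs2 f (e i) (e j)) N) N <= M.
Proof.
  intros Hc. unfold Qt_le.
  assert (Hkill : forall N, psum (fun i => c (e i) * cabs2 f (e i)) N = 0).
  { intro N. rewrite <- (psum_zero N). apply psum_ext; intro; rewrite Hc; ring. }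
  split; intros H N; specialize (H N); rewrite Hkill in *; lra.
Qed.

Lemma pseudometric_lipschitz {X : Type} (s : X -> X -> R) (x u v : X) :
  pseudometric s -> Rabs (s x u - s x v) <= s u v.
Proof.
  intros [_ [_ [Hsym Htri]]].
  pose proof (Htri x u v). pose proof (Htri x v u). rewrite (Hsym v u) in *.
  apply Rabs_le; lra.
Qed.

Definition dist_from {X : Type} (s : X -> X -> R) (x : X) : cfun X :=
  (fun z => s x z, fun _ => 0).

Lemma dist_from_diff2 {X : Type} (s : X -> X -> R) (x u v : X) :
  cdiff_abs2 (dist_from s x) u v = (s x u - s x v) ^ 2.
Proof. unfold cdiff_abs2, dist_from; simpl; ring. Qed.

Lemma dist_from_energy {X : Type} (e : nat -> X) (b : X -> X -> R)
  (s : X -> X -> R) (m : X -> R) (x : X) :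
  (forall u v, 0 <= b u v) -> pseudometric s -> sum_le e m 1 ->
  intrinsic e b m s ->
  forall N, / 2 * psum (fun i => psum (fun j =>
        b (e i) (e j) * cdiff_abs2 (dist_from s x) (e i) (e j)) N) N <= 1.
Proof.
  intros Hb Hs Hm1 Hint N.
  rewrite <- psum_scal. eapply Rle_trans; [|apply (Hm1 N)].
  apply psum_le; intro i. rewrite <- psum_scal.
  eapply Rle_trans; [|apply (Hint (e i) N)].
  apply psum_le; intro j. rewrite dist_from_diff2.
  apply Rmult_le_compat_l; [lra|]. apply Rmult_le_compat_l; [apply Hb|].
  pose proof (pseudometric_lipschitz s x (e i) (e j) Hs) as Hlip.
  pose proof (Rabs_pos (s x (e i) - s x (e j))).
  rewrite <- (pow2_abs (s x (e i) - s x (e j))). simpl. nra.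
Qed.

Lemma intr_set_in_rho_set {X : Type} (e : nat -> X) (b : X -> X -> R)
  (c : X -> R) (x y : X) (t : R) :
  (forall u v, 0 <= b u v) -> (forall z, c z = 0) ->
  intr_set e b x y t -> rho_set e b c x y t.
Proof.
  intros Hb Hc [s [m [Hs [_ [Hm1 [Hint ->]]]]]].
  exists (dist_from s x). split.
  - apply Qt_le_no_killing; [exact Hc|]. apply dist_from_energy with m; assumption.
  - destruct Hs as [Hs0 [Hss _]].
    unfold cdiff_abs. rewrite dist_from_diff2, Hss.
    replace ((0 - s x y) ^ 2) with (s x y * s x y) by ring.
    rewrite sqrt_square; [reflexivity | apply Hs0].
Qed.

Section EnergyMeasure.

Variables (X : Type) (e : nat -> X) (b : X -> X -> R) (f : cfun X).
Hypothesis e_surj : forall z : X, exists n, e n = z.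
Hypothesis b_nonneg : forall u v, 0 <= b u v.

Definition local_energy_term (z : X) (j : nat) : R :=
  / 2 * (b z (e j) * cdiff_abs f z (e j) ^ 2).

Lemma local_energy_term_nonneg (z : X) (j : nat) : 0 <= local_energy_term z j.
Proof.
  unfold local_energy_term.
  pose proof (b_nonneg z (e j)). pose proof (pow2_ge_0 (cdiff_abs f z (e j))). nra.
Qed.

Hypothesis energy_le_1 : forall N,
  / 2 * psum (fun i => psum (fun j =>
          b (e i) (e j) * cdiff_abs2 f (e i) (e j)) N) N <= 1.

Lemma local_energies_le_1 (N M : nat) :
  psum (fun i => psum (local_energy_term (e i)) M) N <= 1.
Proof.
  set (a := fun i j => b (e i) (e j) * cdiff_abs2 f (e i) (e j)).
  assert (Ha : forall i j, 0 <= a i j).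
  { intros; unfold a. pose proof (b_nonneg (e i) (e j)).
    pose proof (cdiff_abs2_nonneg f (e i) (e j)). nra. }
  rewrite (psum_ext _ (fun i => / 2 * psum (a i) M)).
  - rewrite psum_scal.
    assert (Hsq : forall K, psum (fun i => psum (a i) K) K <= 2)
      by (intro K; specialize (energy_le_1 K); unfold a; lra).
    pose proof (psum2_rect_le a 2 Ha Hsq N M). lra.
  - intro i. rewrite <- psum_scal. apply psum_ext; intro j.
    unfold local_energy_term, a. rewrite cdiff_abs_sq; ring.
Qed.

Lemma local_energy_bounded (z : X) (M : nat) : psum (local_energy_term z) M <= 1.
Proof.
  destruct (e_surj z) as [k <-].
  eapply Rle_trans; [|apply (local_energies_le_1 (S k) M)].
  apply (psum_term (fun i => psum (local_energy_term (e i)) M)); [|lia].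
  intro; apply psum_nonneg, local_energy_term_nonneg.
Qed.

Definition energy_measure (z : X) : R :=
  proj1_sig (psum_limit (local_energy_term z) 1
               (local_energy_term_nonneg z) (local_energy_bounded z)).

Lemma energy_measure_spec (z : X) :
  Un_cv (psum (local_energy_term z)) (energy_measure z) /\
  forall N, psum (local_energy_term z) N <= energy_measure z.
Proof. unfold energy_measure; destruct psum_limit; assumption. Qed.

Lemma energy_measure_is_measure : measure energy_measure.
Proof.
  intro z. apply Rle_trans with (psum (local_energy_term z) 0); [simpl; lra|].
  apply energy_measure_spec.
Qed.

Lemma energy_measure_mass : sum_le e energy_measure 1.
Proof.
  intro N. apply (psum_lim_le (fun i M => psum (local_energy_term (e i)) M)).
  - intro i; apply energy_measure_spec.
  - intro M; apply local_energies_le_1.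
Qed.

Lemma cdiff_intrinsic : intrinsic e b energy_measure (cdiff_abs f).
Proof. intros z N. apply energy_measure_spec. Qed.

End EnergyMeasure.

Lemma rho_set_in_intr_set {X : Type} (e : nat -> X) (b : X -> X -> R)
  (c : X -> R) (x y : X) (t : R) :
  (forall z, exists n, e n = z) -> (forall u v, 0 <= b u v) -> (forall z, c z = 0) ->
  rho_set e b c x y t -> intr_set e b x y t.
Proof.
  intros He Hb Hc [f [Hf ->]].
  pose proof (proj1 (Qt_le_no_killing e b c f 1 Hc) Hf) as Henergy.
  exists (cdiff_abs f), (energy_measure X e b f He Hb Henergy).
  split; [apply cdiff_pseudometric|].
  split; [apply energy_measure_is_measure|].
  split; [apply energy_measure_mass|].
  split; [apply cdiff_intrinsic | reflexivity].
Qed.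

Theorem mainTheorem4 (X : Type) (e : nat -> X) (b : X -> X -> R) (c : X -> R) :
  enumeration X e ->
  weighted_graph e b c ->
  connected b ->
  (forall x, c x = 0) ->
  forall (x y : X) (r : R),
    is_upper_bound (rho_set e b c x y) r <->
    is_upper_bound (intr_set e b x y) r.
Proof.
  intros [He _] [Hb _] _ Hc x y r.
  split; intros Hub t Ht; apply Hub.
  - apply (intr_set_in_rho_set e b c); assumption.
  - apply (rho_set_in_intr_set e b c); assumption.
Qed.
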